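(* Let $G$ be a finite, connected, undirected, unweighted graph without loops or multi-edges, with vertex set $V(G)$ of size $n \ge 2$. For distinct $v,u \in V(G)$ let $d(v,u)$ be the length (number of edges) of a shortest path between $v$ and $u$, let $\sigma(v,u) \ge 1$ be the number of distinct shortest paths between $v$ and $u$, and let $\Delta(G) = \max_{v,u \in V(G)} d(v,u)$ be the diameter of $G$. Define \[ ADPL(G) = \frac{1}{n(n-1)} \sum_{v \in V(G)} \sum_{u \in V(G)\setminus\{v\}} \frac{d(v,u)}{\sigma(v,u)}. \] Let $T \ge 1$ be an integer and let $v_1,\dots,v_T$ be vertices each chosen independently and uniformly at random from $V(G)$. For $1 \le t \le T$ set \[ \beta_t = \frac{1}{n-1} \sum_{u \in V(G)\setminus\{v_t\}} \frac{d(v_t,u)}{\sigma(v_t,u)}, \qquad \beta = \frac{1}{T}\sum_{t=1}^T \beta_t . \] Then for every $\epsilon > 0$, \[ \mathbf{P}\left[\,\left|ADPL(G) - \beta\right| > \epsilon\,\right] \le 2\exp\!\left(-2T\left(\frac{\epsilon}{\Delta(G)}\right)^2\right). \]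
   Context: The random variable $\beta$ is the output of the paper's sampling algorithm for estimating average discriminative path length: in each of $T$ iterations it picks a vertex uniformly at random (independently across iterations), computes distances and numbers of shortest paths from it to all other vertices, forms $\beta_t$, and finally outputs the average $\beta$. *)

From HB Require Import structures.
From mathcomp Require Import all_boot all_order all_algebra.
From mathcomp Require Import all_classical all_reals all_analysis.
Set Implicit Arguments. Unset Strict Implicit. Unset Printing Implicit Defensive.
Import Order.TTheory GRing.Theory Num.Theory.

(* A simple undirected graph on a finite vertex type V is given by an
   edge relation e : rel V, assumed symmetric and irreflexive. *)

Definition walk_of (V : finType) (e : rel V) (k : nat) (v u : V) :
  {set k.-tuple V} :=
  [set t : k.-tuple V | path e v t && (last v t == u)].

Definition has_walk (V : finType) (e : rel V) (k : nat) (v u : V) : bool :=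
  (0 < #|walk_of e k v u|)%N.

(* d(v,u): the least number of edges of a walk (= path) from v to u;
   0 by convention if u is unreachable (never happens for connected G). *)
Definition dist (V : finType) (e : rel V) (v u : V) : nat :=
  match pselect (exists k, has_walk e k v u) with
  | left h => ex_minn h
  | right _ => 0
  end.

(* sigma(v,u): the number of shortest paths from v to u, i.e. of vertex
   sequences of length d(v,u) forming a walk from v to u (a shortest walk
   is automatically a path, and in a simple graph a path is determined by
   its vertex sequence). *)
Definition nsp (V : finType) (e : rel V) (v u : V) : nat :=
  #|walk_of e (dist e v u) v u|.

Definition diam (V : finType) (e : rel V) : nat :=
  \max_(v : V) \max_(u : V) dist e v u.

Local Open Scope ring_scope.

Definition ADPL (R : realType) (V : finType) (e : rel V) : R :=
  (#|V|%:R * (#|V|.-1)%:R)^-1 *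
  \sum_(v : V) \sum_(u : V | u != v) (dist e v u)%:R / (nsp e v u)%:R.

Definition beta_of (R : realType) (V : finType) (e : rel V) (w : V) : R :=
  ((#|V|.-1)%:R)^-1 * \sum_(u : V | u != w) (dist e w u)%:R / (nsp e w u)%:R.

Definition beta (R : realType) (V : finType) (e : rel V) (T : nat)
  (s : {ffun 'I_T -> V}) : R :=
  (T%:R)^-1 * \sum_(t < T) beta_of R e (s t).

(* Probability of an event on T independent uniform samples from V:
   the uniform (product) distribution on {ffun 'I_T -> V}. *)
Definition sample_prob (R : realType) (V : finType) (T : nat)
  (A : pred {ffun 'I_T -> V}) : R :=
  #|[set s : {ffun 'I_T -> V} | A s]|%:R / (#|V| ^ T)%:R.

From mathcomp Require Import all_boot all_order all_algebra.
From mathcomp Require Import all_classical all_reals all_analysis.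
From mathcomp Require Import lra ring.
Set Implicit Arguments. Unset Strict Implicit. Unset Printing Implicit Defensive.
Import Order.TTheory GRing.Theory Num.Theory.
Local Open Scope ring_scope.

(* Each beta_t is a uniform sample of w |-> beta_of w, whose mean over V is
   ADPL, and 0 <= d/sigma <= Delta puts beta_of in [0, Delta]; so the claim is
   Hoeffding's inequality for T independent [0, Delta]-valued samples.  That is
   proved by the Chernoff method: the exponential moment of the sum factorises
   over the T coordinates, and each factor is bounded by Hoeffding's lemma.  By
   convexity of exp, the lemma reduces to the two-point bound
   1 - p + p e^h <= exp (p h + h^2/8), which holds because
   K h = (1 - p + p e^h) exp (- p h - h^2/8) satisfies K 0 = 1 and
   K' = K (q - p - h/4) with q = p e^h / (1 - p + p e^h), and this slope
   vanishes at 0 and has derivative q - q^2 - 1/4 = - (q - 1/2)^2 <= 0, so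
   K decreases on h >= 0.
   Nothing about the graph beyond 0 <= d/sigma <= Delta is used. *)

Section RealFacts.
Variable R : realType.

Lemma expR_convex_le (t y : R) : 0 <= t -> t <= 1 ->
  expR (t * y) <= 1 - t + t * expR y.
Proof.
move=> t_ge0 t_le1; have := @convex_expR R (Itv01 t_ge0 t_le1) y 0.
by rewrite !convRE /= expR0 mulr0 addr0 mulr1 /unstable.onem addrC.
Qed.

Lemma is_derive_le0_nincr (f df : R -> R) (a : R) :
  (forall x : R, is_derive x 1 f (df x)) -> (forall x, a < x -> df x <= 0) ->
  forall x y, a <= x -> x <= y -> f y <= f x.
Proof.
move=> f_df df_le0; apply: ler0_derive1_nincry.
- by move=> x _; exact: ex_derive.
- by move=> x; rewrite in_itv /= andbT derive1E derive_val; exact: df_le0.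
- by apply: derivable_within_continuous => x _; exact: ex_derive.
Qed.

End RealFacts.

Section HoeffdingBernoulli.
Variables (R : realType) (p : R).
Hypotheses (p_ge0 : 0 <= p) (p_le1 : p <= 1).

Definition bernoulli_mgf (h : R) : R := 1 - p + p * expR h.

Lemma bernoulli_mgf_gt0 h : 0 < bernoulli_mgf h.
Proof.
rewrite /bernoulli_mgf; have [->|p_neq0] := eqVneq p 0; first by lra.
have : 0 < p * expR h by rewrite mulr_gt0 ?expR_gt0 // lt_def p_neq0.
move: p_le1; lra.
Qed.

Lemma is_derive_bernoulli_mgf (x : R) :
  is_derive x 1 bernoulli_mgf (p * expR x).
Proof. by apply: is_derive_eq; rewrite add0r mul1r. Qed.

Definition tilted_prob (h : R) : R := p * expR h / bernoulli_mgf h.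

Definition hoeffding_slope (h : R) : R := tilted_prob h - p - h / 4.

Lemma is_derive_hoeffding_slope (x : R) : is_derive x 1 hoeffding_slope
  (tilted_prob x - tilted_prob x ^+ 2 - 1 / 4).
Proof.
have mgf_neq0 := lt0r_neq0 (bernoulli_mgf_gt0 x).
have inv_mgf : is_derive x 1 (fun y => (bernoulli_mgf y)^-1)
    (- (bernoulli_mgf x) ^- 2 *: (p * expR x)).
  by apply: is_deriveV => //; exact: is_derive_bernoulli_mgf.
rewrite /hoeffding_slope /tilted_prob; apply: is_derive_eq.
by rewrite /GRing.scale /=; field.
Qed.

Lemma hoeffding_slope_le0 h : 0 <= h -> hoeffding_slope h <= 0.
Proof.
have slope0 : hoeffding_slope 0 = 0.
  rewrite /hoeffding_slope /tilted_prob /bernoulli_mgf.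
  by rewrite expR0 mulr1 subrK divr1 mul0r; lra.
move=> h_ge0; rewrite -slope0.
apply: (@is_derive_le0_nincr _ _ _ 0 is_derive_hoeffding_slope) => // x _.
have : 0 <= (tilted_prob x - 1 / 2) ^+ 2 by exact: sqr_ge0.
lra.
Qed.

Definition hoeffding_ratio (h : R) : R :=
  bernoulli_mgf h * expR (- (p * h) - h ^+ 2 / 8).

Lemma is_derive_hoeffding_ratio (x : R) :
  is_derive x 1 hoeffding_ratio (hoeffding_ratio x * hoeffding_slope x).
Proof.
have mgf_neq0 := lt0r_neq0 (bernoulli_mgf_gt0 x).
rewrite /hoeffding_ratio /hoeffding_slope /tilted_prob; apply: is_derive_eq.
by rewrite /GRing.scale /=; field.
Qed.

Lemma bernoulli_mgf_le h : 0 <= h ->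
  bernoulli_mgf h <= expR (p * h + h ^+ 2 / 8).
Proof.
move=> h_ge0.
have ratio0 : hoeffding_ratio 0 = 1.
  by rewrite /hoeffding_ratio /bernoulli_mgf expR0 mulr1 subrK mul1r mulr0
    expr0n /= mul0r subr0 oppr0 expR0.
have : hoeffding_ratio h <= 1.
  rewrite -ratio0.
  apply: (@is_derive_le0_nincr _ _ _ 0 is_derive_hoeffding_ratio) => // x x_gt0.
  rewrite pmulr_rle0 ?hoeffding_slope_le0 ?ltW //.
  by rewrite mulr_gt0 ?bernoulli_mgf_gt0 ?expR_gt0.
rewrite /hoeffding_ratio -(ler_pM2r (expR_gt0 (p * h + h ^+ 2 / 8))) mul1r.
rewrite -mulrA -expRD.
have -> : - (p * h) - h ^+ 2 / 8 + (p * h + h ^+ 2 / 8) = 0 by ring.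
by rewrite expR0 mulr1.
Qed.

End HoeffdingBernoulli.

Section UniformSampling.
Variables (R : realType) (V : finType).

Definition mean (f : V -> R) : R := (#|V|%:R)^-1 * \sum_(v : V) f v.

Lemma sum_expR_centered_le (f : V -> R) (D lam : R) :
  0 < D -> 0 <= lam -> (forall v, 0 <= f v <= D) -> (0 < #|V|)%N ->
  \sum_(v : V) expR (lam * (f v - mean f))
    <= #|V|%:R * expR (lam ^+ 2 * D ^+ 2 / 8).
Proof.
move=> D_gt0 lam_ge0 f_bnd V_gt0.
have D_neq0 := lt0r_neq0 D_gt0.
have n_neq0 : #|V|%:R != 0 :> R by rewrite pnatr_eq0 -lt0n.
set p := mean f / D.
have f_share v : 0 <= f v / D <= 1.
  case/andP: (f_bnd v) => f0 f1.
  apply/andP; split; first exact: divr_ge0 f0 (ltW D_gt0).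
  by rewrite ler_pdivrMr ?mul1r.
have sum_ge0 : 0 <= \sum_v f v by apply: sumr_ge0 => v _; case/andP: (f_bnd v).
have sum_le : \sum_v f v <= #|V|%:R * D.
  have -> : #|V|%:R * D = \sum_(v : V) D by rewrite sumr_const mulr_natl.
  by apply: ler_sum => v _; case/andP: (f_bnd v).
have p_ge0 : 0 <= p.
  by apply: divr_ge0 (ltW D_gt0); rewrite mulr_ge0 ?invr_ge0.
have p_le1 : p <= 1.
  by rewrite /p /mean ler_pdivrMr // mul1r mulrC ler_pdivrMr ?ltr0n // mulrC.
have convex_sum :
    \sum_v expR (lam * f v) <= #|V|%:R * bernoulli_mgf p (lam * D).
  have -> : #|V|%:R * bernoulli_mgf p (lam * D)
      = \sum_v (1 - f v / D + f v / D * expR (lam * D)).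
    rewrite big_split sumrB /= sumr_const -!mulr_suml /bernoulli_mgf /p /mean.
    by rewrite -[#|xpredT|]/#|V|; field; rewrite D_neq0 n_neq0.
  apply: ler_sum => v _; case/andP: (f_share v) => t0 t1.
  have := expR_convex_le (lam * D) t0 t1.
  by rewrite [_ * (lam * D)]mulrCA divfK.
have shift : \sum_v expR (lam * (f v - mean f))
    = expR (- (lam * mean f)) * \sum_v expR (lam * f v).
  by rewrite mulr_sumr; apply: eq_bigr => v _; rewrite -expRD mulrBr addrC.
have lam_mean : p * (lam * D) = lam * mean f by rewrite /p; field.
have mgf_le := bernoulli_mgf_le p_ge0 p_le1 (mulr_ge0 lam_ge0 (ltW D_gt0)).
rewrite lam_mean in mgf_le.
rewrite shift; apply: (le_trans (ler_wpM2l (expR_ge0 _) convex_sum)).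
rewrite mulrCA ler_pM2l ?ltr0n //.
apply: (le_trans (ler_wpM2l (expR_ge0 _) mgf_le)).
by rewrite -expRD addKr exprMn.
Qed.

Lemma card_gt_le_sum_expR (S : finType) (X : S -> R) (a lam : R) : 0 <= lam ->
  #|[set s | a < X s]|%:R <= \sum_s expR (lam * (X s - a)).
Proof.
move=> lam_ge0; rewrite -sum1_card natr_sum big_mkcond /=.
apply: ler_sum => s _; rewrite inE; case: ifP => [a_lt|_]; last exact: expR_ge0.
apply: le_trans (expR_ge1Dx _); rewrite lerDl mulr_ge0 //.
by rewrite subr_ge0 ltW.
Qed.

Lemma sum_ffun_expR_sum (T : nat) (g : V -> R) :
  \sum_(s : {ffun 'I_T -> V}) expR (\sum_(t < T) g (s t))
    = (\sum_v expR (g v)) ^+ T.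
Proof.
rewrite -[in RHS](card_ord T) -prodr_const bigA_distr_bigA.
by apply: eq_bigr => s _; rewrite expR_sum.
Qed.

Lemma card_sum_centered_gt_le (T : nat) (f : V -> R) (D eps : R) :
  0 < D -> 0 < eps -> (forall v, 0 <= f v <= D) -> (0 < #|V|)%N ->
  #|[set s : {ffun 'I_T -> V} | T%:R * eps < \sum_(t < T) (f (s t) - mean f)]|%:R
    <= (#|V| ^ T)%:R * expR (- (2 * T%:R * (eps / D) ^+ 2)).
Proof.
move=> D_gt0 eps_gt0 f_bnd V_gt0.
(* the Chernoff parameter minimizing [- lam eps + lam^2 D^2 / 8] *)
set lam := 4 * eps / D ^+ 2.
have lam_ge0 : 0 <= lam by rewrite divr_ge0 ?mulr_ge0 ?sqr_ge0 ?ltW.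
apply: (le_trans (card_gt_le_sum_expR _ _ lam_ge0)).
under eq_bigr => s _ do rewrite mulrBr expRD mulr_sumr mulrC.
rewrite -mulr_sumr (sum_ffun_expR_sum T (fun v => lam * (f v - mean f))).
have mgf_ge0 : 0 <= \sum_v expR (lam * (f v - mean f)).
  by apply: sumr_ge0 => v _; exact: expR_ge0.
have mgf_pow := lerXn2r T mgf_ge0 (mulr_ge0 (ler0n _ _) (expR_ge0 _))
  (sum_expR_centered_le D_gt0 lam_ge0 f_bnd V_gt0).
apply: (le_trans (ler_wpM2l (expR_ge0 _) mgf_pow)).
rewrite exprMn natrX mulrCA -expRM_natr -expRD ler_pM2l ?exprn_gt0 ?ltr0n //.
have exponent : - (lam * (T%:R * eps)) + lam ^+ 2 * D ^+ 2 / 8 * T%:R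
    = - (2 * T%:R * (eps / D) ^+ 2).
  by rewrite /lam; field; exact: lt0r_neq0.
by rewrite exponent.
Qed.

Lemma sample_prob_mean_dev_gt_le (T : nat) (f : V -> R) (D eps : R) :
  0 < D -> 0 < eps -> (0 < T)%N -> (forall v, 0 <= f v <= D) -> (0 < #|V|)%N ->
  sample_prob R (fun s : {ffun 'I_T -> V} =>
                   eps < `|mean f - T%:R^-1 * \sum_(t < T) f (s t)|)
    <= 2 * expR (- (2 * T%:R * (eps / D) ^+ 2)).
Proof.
move=> D_gt0 eps_gt0 T_gt0 f_bnd V_gt0.
have T_neq0 : T%:R != 0 :> R by rewrite pnatr_eq0 -lt0n.
have n_neq0 : #|V|%:R != 0 :> R by rewrite pnatr_eq0 -lt0n.
(* the lower tail of [f] is the upper tail of its reflection [D - f] *)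
pose g v := D - f v.
have g_bnd v : 0 <= g v <= D.
  by case/andP: (f_bnd v) => f0 f1; rewrite /g subr_ge0 f1 lerBlDr lerDl f0.
have mean_g : mean g = D - mean f.
  by rewrite /mean /g sumrB sumr_const -mulr_natl; field.
pose dev (s : {ffun 'I_T -> V}) := \sum_(t < T) (f (s t) - mean f).
have dev_g (s : {ffun 'I_T -> V}) : \sum_(t < T) (g (s t) - mean g) = - dev s.
  by rewrite /dev -sumrN; apply: eq_bigr => t _; rewrite mean_g /g; ring.
rewrite /sample_prob ler_pdivrMr ?ltr0n ?expn_gt0 ?V_gt0 //.
set E := [set s | _].
have E_sub : E \subset
    [set s : {ffun 'I_T -> V} | T%:R * eps < dev s] :|:
    [set s : {ffun 'I_T -> V} | T%:R * eps < \sum_(t < T) (g (s t) - mean g)].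
  apply/fintype.subsetP => s; rewrite !inE dev_g.
  have -> : mean f - T%:R^-1 * \sum_(t < T) f (s t) = - (T%:R^-1 * dev s).
    by rewrite /dev sumrB sumr_const card_ord; field.
  rewrite normrN normrM gtr0_norm ?invr_gt0 ?ltr0n //.
  by rewrite ltr_pdivlMl ?ltr0n // ltr_normr.
have upper := card_sum_centered_gt_le T D_gt0 eps_gt0 f_bnd V_gt0.
have lower := card_sum_centered_gt_le T D_gt0 eps_gt0 g_bnd V_gt0.
set bound := expR _; rewrite -mulrA mulr_natl mulr2n [bound * _]mulrC.
apply: le_trans (lerD upper lower).
rewrite -natrD ler_nat; apply: leq_trans (subset_leq_card E_sub) _.
by rewrite cardsU leq_subr.
Qed.

Lemma sample_prob_le1 (T : nat) (A : pred {ffun 'I_T -> V}) :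
  (0 < #|V|)%N -> sample_prob R A <= 1.
Proof.
move=> V_gt0; rewrite /sample_prob ler_pdivrMr ?mul1r ?ltr0n ?expn_gt0 ?V_gt0 //.
by have := max_card (mem [set s | A s]); rewrite card_ffun card_ord ler_nat.
Qed.

End UniformSampling.

Section PathLengths.
Variables (R : realType) (V : finType) (e : rel V).

Lemma dist_le_diam (v u : V) : (dist e v u <= diam e)%N.
Proof.
apply: leq_trans (leq_bigmax (F := fun u => dist e v u) u) _.
exact: (leq_bigmax (F := fun v => \max_(u : V) dist e v u) v).
Qed.

Lemma dist_div_nsp_le_diam (v u : V) :
  (dist e v u)%:R / (nsp e v u)%:R <= (diam e)%:R :> R.
Proof.
apply: (@le_trans _ _ (dist e v u)%:R); last by rewrite ler_nat dist_le_diam.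
have [->|nsp_gt0] := posnP (nsp e v u); first by rewrite invr0 mulr0.
by rewrite ler_pdivrMr ?ltr0n // ler_peMr ?ler0n // ler1n.
Qed.

Lemma beta_of_bnd (w : V) : (1 < #|V|)%N -> 0 <= beta_of R e w <= (diam e)%:R.
Proof.
move=> V_gt1.
have n1_gt0 : (0 : R) < (#|V|.-1)%:R by rewrite ltr0n -subn1 subn_gt0.
rewrite /beta_of; apply/andP; split.
  by apply: mulr_ge0 (sumr_ge0 _ _) => [|u _]; rewrite ?invr_ge0 ?divr_ge0.
rewrite ler_pdivrMl // -(cardC1 w) mulr_natl -sumr_const.
by apply: ler_sum => u _; exact: dist_div_nsp_le_diam.
Qed.

Lemma ADPL_mean : ADPL R e = mean (beta_of R e).
Proof. by rewrite /ADPL /mean /beta_of -mulr_sumr invfM -mulrA. Qed.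

End PathLengths.

Theorem proposition2 (R : realType) (V : finType) (e : rel V)
  (e_sym : symmetric e) (e_irr : irreflexive e)
  (e_conn : forall v u : V, connect e v u)
  (hn : (2 <= #|V|)%N) (T : nat) (hT : (1 <= T)%N)
  (eps : R) (heps : 0 < eps) :
  sample_prob R (fun s : {ffun 'I_T -> V} => `|ADPL R e - beta R e s| > eps)
    <= 2 * expR (- (2 * T%:R * (eps / (diam e)%:R) ^+ 2)).
Proof.
have V_gt0 : (0 < #|V|)%N by apply: leq_trans hn.
have [diam0|diam_gt0] := posnP (diam e).
  (* [eps / 0 = 0], so the bound degenerates to 2 *)
  rewrite diam0 invr0 mulr0 expr0n /= mulr0 oppr0 expR0 mulr1.
  by apply: le_trans (sample_prob_le1 _ _ V_gt0) _; rewrite ler1n.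
rewrite ADPL_mean /beta; apply: sample_prob_mean_dev_gt_le => //.
- by rewrite ltr0n.
- by move=> w; exact: beta_of_bnd.
Qed.
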